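(* Let $\Omega$ be a doubly periodic domain (flat $2$-torus), $p_1,\dots,p_N\in\Omega$ (not necessarily distinct) and $\lambda>0$. If $u$ is a solution of $$(1-e^u)\Delta u-e^u|\nabla u|^2=-\lambda e^u(e^u-1)^2+4\pi\sum_{s=1}^N\delta_{p_s}\quad\text{in }\Omega,$$ then $u<0$ throughout $\Omega$.
   Context: All functions are doubly periodic on $\Omega$; $\delta_p$ is the Dirac distribution at $p$. A solution means a function $u$, smooth on $\Omega$ minus the points $p_s$, satisfying $(1-e^u)\Delta u-e^u|\nabla u|^2=-\lambda e^u(e^u-1)^2$ pointwise away from the points, and such that near each point $p$ occurring with multiplicity $n$ among $p_1,\dots,p_N$, $u(x)=n\ln|x-p|^2+f(x)$ with $f$ smooth near $p$ (so $u\to-\infty$ at the points). *)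

From Stdlib Require Import Reals List ZArith ClassicalEpsilon.
From Coquelicot Require Import Coquelicot.
Open Scope R_scope.

Definition partial1 (f : R -> R -> R) : R -> R -> R :=
  fun x y => Derive (fun t => f t y) x.
Definition partial2 (f : R -> R -> R) : R -> R -> R :=
  fun x y => Derive (fun t => f x t) y.

(* iterated partial derivative; true = d/dx, false = d/dy *)
Fixpoint iter_partial (l : list bool) (f : R -> R -> R) : R -> R -> R :=
  match l with
  | nil => f
  | b :: l' => (if b then partial1 else partial2) (iter_partial l' f)
  end.

Definition smooth_on (U : R -> R -> Prop) (f : R -> R -> R) : Prop :=
  forall (l : list bool) (x y : R), U x y ->
    continuity_2d_pt (iter_partial l f) x y /\
    ex_derive (fun t => iter_partial l f t y) x /\
    ex_derive (fun t => iter_partial l f x t) y.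

Definition laplacian (u : R -> R -> R) : R -> R -> R :=
  fun x y => partial1 (partial1 u) x y + partial2 (partial2 u) x y.

Definition grad_sq (u : R -> R -> R) : R -> R -> R :=
  fun x y => (partial1 u x y) ^ 2 + (partial2 u x y) ^ 2.

(* The flat torus Omega = R^2 / (Z w1 + Z w2); congruence modulo the lattice *)
Definition lattice_equiv (w1 w2 : R * R) (a b : R * R) : Prop :=
  exists m k : Z,
    fst a - fst b = IZR m * fst w1 + IZR k * fst w2 /\
    snd a - snd b = IZR m * snd w1 + IZR k * snd w2.

Definition singular (w1 w2 : R * R) (ps : list (R * R)) (x y : R) : Prop :=
  exists p, In p ps /\ lattice_equiv w1 w2 (x, y) p.

Definition multiplicity (w1 w2 : R * R) (ps : list (R * R)) (q : R * R) : nat :=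
  length (filter (fun p => if excluded_middle_informative (lattice_equiv w1 w2 p q)
                           then true else false) ps).

Definition dist_sq (x y : R) (p : R * R) : R :=
  (x - fst p) ^ 2 + (y - snd p) ^ 2.

Definition is_solution (w1 w2 : R * R) (ps : list (R * R)) (lam : R)
    (u : R -> R -> R) : Prop :=
  (forall x y, ~ singular w1 w2 ps x y ->
     u (x + fst w1) (y + snd w1) = u x y /\ u (x + fst w2) (y + snd w2) = u x y) /\
  smooth_on (fun x y => ~ singular w1 w2 ps x y) u /\
  (forall x y, ~ singular w1 w2 ps x y ->
     (1 - exp (u x y)) * laplacian u x y - exp (u x y) * grad_sq u x y
       = - lam * exp (u x y) * (exp (u x y) - 1) ^ 2) /\
  (forall p, In p ps ->
     exists (r : R) (f : R -> R -> R), 0 < r /\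
       smooth_on (fun x y => dist_sq x y p < r ^ 2) f /\
       forall x y, 0 < dist_sq x y p < r ^ 2 ->
         u x y = INR (multiplicity w1 w2 ps p) * ln (dist_sq x y p) + f x y).

From Stdlib Require Import Reals List Lra Lia Psatz ZArith Classical ClassicalEpsilon.
From Coquelicot Require Import Coquelicot.
Open Scope R_scope.
Set Bullet Behavior "Strict Subproofs".

(* Let [M] be the maximum of [u] on the torus; it is attained because [u -> -oo] at the points
   [p_s]. If [M > 0], then at a maximum point [grad u = 0] and [Δu <= 0], so the left-hand side
   [(1 - e^u) Δu] is [>= 0] while the right-hand side [-λ e^u (e^u - 1)^2] is [< 0].
   If [M = 0], then [Q = (1 - e^u)^2 >= 0] satisfies [ΔQ <= 2λ Q] wherever [u <= 0], so by the
   strong minimum principle (proved with circle means) the zero set of [u] is open; it is also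
   relatively closed, and following a segment towards some [p_s] reaches points where
   [u -> -oo], a contradiction. Hence [M < 0]. *)

(** * Calculus in one and two variables *)

Lemma is_derive_eq (f : R -> R) x l l' : is_derive f x l -> l = l' -> is_derive f x l'.
Proof. intros H ->; exact H. Qed.

Lemma is_derive_continuity_pt (f : R -> R) x l : is_derive f x l -> continuity_pt f x.
Proof.
  intros H. apply continuity_pt_filterlim. exact (ex_derive_continuous f x (ex_intro _ l H)).
Qed.

Lemma MVT_closed (f df : R -> R) a b : a <= b ->
  (forall t, a <= t <= b -> is_derive f t (df t)) ->
  exists c, a <= c <= b /\ f b - f a = df c * (b - a).
Proof.
  intros Hab Hd.
  destruct (MVT_gen f a b df) as [c [Hc E]].
  - intros x Hx. rewrite Rmin_left, Rmax_right in Hx by lra. apply Hd; lra.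
  - intros x Hx. rewrite Rmin_left, Rmax_right in Hx by lra.
    apply (is_derive_continuity_pt f x (df x)), Hd; lra.
  - rewrite Rmin_left, Rmax_right in Hc by lra. eauto.
Qed.

Lemma nonincreasing_of_derive_nonpos (g dg : R -> R) a b : a <= b ->
  (forall x, a <= x <= b -> is_derive g x (dg x)) ->
  (forall x, a < x < b -> dg x <= 0) -> g b <= g a.
Proof.
  intros Hab Hd Hneg.
  destruct (Req_dec a b) as [<-|Hne]; [lra|].
  (* [MVT_gen] only locates [c] in the closed interval: the derivative is redefined
     as [0] at the endpoints so that the sign condition holds everywhere. *)
  set (dg' := fun x => if Rlt_dec a x then if Rlt_dec x b then dg x else 0 else 0).
  destruct (MVT_gen g a b dg') as [c [Hc E]].
  - intros x Hx. rewrite Rmin_left, Rmax_right in Hx by lra.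
    unfold dg'. do 2 (destruct Rlt_dec; [|lra]). apply Hd; lra.
  - intros x Hx. rewrite Rmin_left, Rmax_right in Hx by lra.
    apply (is_derive_continuity_pt g x (dg x)), Hd; lra.
  - assert (dg' c <= 0).
    { unfold dg'. destruct Rlt_dec; [|lra]. destruct Rlt_dec; [|lra]. apply Hneg; lra. }
    nra.
Qed.

Lemma derive_pos_right (f : R -> R) x l : is_derive f x l -> 0 < l ->
  exists d, 0 < d /\ forall h, 0 < h < d -> f x < f (x + h).
Proof.
  intros Hd Hl. apply is_derive_Reals in Hd.
  destruct (Hd (l / 2)) as [d Hd2]; [lra|].
  exists d; split; [apply cond_pos|]. intros h Hh.
  specialize (Hd2 h ltac:(lra) ltac:(rewrite Rabs_pos_eq; lra)).
  apply Rabs_def2 in Hd2.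
  assert (0 < (f (x + h) - f x) / h) by lra.
  assert (0 < (f (x + h) - f x) / h * h) by nra.
  replace ((f (x + h) - f x) / h * h) with (f (x + h) - f x) in * by (field; lra).
  lra.
Qed.

Lemma derive_neg_left (f : R -> R) x l : is_derive f x l -> l < 0 ->
  exists d, 0 < d /\ forall h, 0 < h < d -> f x < f (x - h).
Proof.
  intros Hd Hl. apply is_derive_Reals in Hd.
  destruct (Hd (- l / 2)) as [d Hd2]; [lra|].
  exists d; split; [apply cond_pos|]. intros h Hh.
  specialize (Hd2 (- h) ltac:(lra) ltac:(rewrite Rabs_left; lra)).
  apply Rabs_def2 in Hd2.
  assert ((f (x + - h) - f x) / - h < 0) by lra.
  assert (0 < (f (x + - h) - f x) / - h * - h) by nra.
  replace ((f (x + - h) - f x) / - h * - h) with (f (x + - h) - f x) in * by (field; lra).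
  replace (x - h) with (x + - h) by ring. lra.
Qed.

Section LocalMax.

Variables (phi : R -> R) (x0 d : R).
Hypothesis d_pos : 0 < d.
Hypothesis phi_max : forall t, Rabs (t - x0) < d -> phi t <= phi x0.

Lemma local_max_derive_eq0 l : is_derive phi x0 l -> l = 0.
Proof.
  intros Hl. destruct (Rtotal_order l 0) as [Hn|[He|Hp]]; auto; exfalso.
  - destruct (derive_neg_left phi x0 l Hl Hn) as [d1 [Hd1 H1]].
    set (h := Rmin d d1 / 2).
    assert (Hh : 0 < h < d /\ h < d1) by (unfold h, Rmin; destruct Rle_dec; lra).
    specialize (H1 h ltac:(lra)).
    assert (phi (x0 - h) <= phi x0) by (apply phi_max; rewrite Rabs_left; lra).
    lra.
  - destruct (derive_pos_right phi x0 l Hl Hp) as [d1 [Hd1 H1]].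
    set (h := Rmin d d1 / 2).
    assert (Hh : 0 < h < d /\ h < d1) by (unfold h, Rmin; destruct Rle_dec; lra).
    specialize (H1 h ltac:(lra)).
    assert (phi (x0 + h) <= phi x0) by (apply phi_max; rewrite Rabs_pos_eq; lra).
    lra.
Qed.

Lemma local_max_derive2_le0 (dphi : R -> R) l :
  (forall t, Rabs (t - x0) < d -> is_derive phi t (dphi t)) ->
  is_derive dphi x0 l -> l <= 0.
Proof.
  intros Hd Hl. destruct (Rle_or_lt l 0) as [|Hp]; auto; exfalso.
  assert (D0 : dphi x0 = 0).
  { apply local_max_derive_eq0, Hd. rewrite Rminus_diag, Rabs_R0. lra. }
  destruct (derive_pos_right dphi x0 l Hl Hp) as [d1 [Hd1 H1]].
  set (h := Rmin d d1 / 2).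
  assert (Hh : 0 < h < d /\ h < d1) by (unfold h, Rmin; destruct Rle_dec; lra).
  assert (Hin : forall t, x0 <= t <= x0 + h -> Rabs (t - x0) < d)
    by (intros t Ht; rewrite Rabs_pos_eq; lra).
  assert (Hpos : forall t, x0 < t <= x0 + h -> 0 < dphi t).
  { intros t Ht. rewrite <- D0. replace t with (x0 + (t - x0)) by ring. apply H1. lra. }
  assert (phi x0 <= phi (x0 + h / 2)).
  { apply Ropp_le_cancel.
    apply (nonincreasing_of_derive_nonpos (fun t => - phi t) (fun t => - dphi t)); try lra.
    - intros t Ht. apply (is_derive_opp phi), Hd, Hin. lra.
    - intros t Ht. assert (0 < dphi t) by (apply Hpos; lra). lra. }
  destruct (MVT_closed phi dphi (x0 + h / 2) (x0 + h)) as [c [Hc E]]; [lra| |].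
  { intros t Ht. apply Hd, Hin. lra. }
  assert (0 < dphi c) by (apply Hpos; lra).
  assert (phi (x0 + h) <= phi x0) by (apply phi_max, Hin; lra).
  nra.
Qed.

End LocalMax.

Lemma ex_RInt_continuity (f : R -> R) a b : (forall x, continuity_pt f x) -> ex_RInt f a b.
Proof.
  intros H. apply (ex_RInt_continuous (V := R_CompleteNormedModule)). intros z _.
  apply continuity_pt_filterlim, H.
Qed.

Lemma RInt_lincomb (f g : R -> R) a b k l : ex_RInt f a b -> ex_RInt g a b ->
  RInt (fun t => k * f t + l * g t) a b = k * RInt f a b + l * RInt g a b.
Proof.
  intros Hf Hg. apply is_RInt_unique.
  apply (is_RInt_ext (fun t => plus (scal k (f t)) (scal l (g t)))); [reflexivity|].
  apply (is_RInt_plus (V := R_NormedModule)); apply (is_RInt_scal (V := R_NormedModule));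
    apply (RInt_correct (V := R_CompleteNormedModule)); auto.
Qed.

Lemma RInt_ext_R (f g : R -> R) a b : (forall x, f x = g x) -> RInt f a b = RInt g a b.
Proof. intros H. apply RInt_ext. intros; apply H. Qed.

Lemma RInt_const_R (c a b : R) : RInt (fun _ => c) a b = (b - a) * c.
Proof. rewrite RInt_const. reflexivity. Qed.

Lemma RInt_ge0_continuity (f : R -> R) a b : a <= b -> (forall x, continuity_pt f x) ->
  (forall x, a <= x <= b -> 0 <= f x) -> 0 <= RInt f a b.
Proof.
  intros Hab Hc Hp.
  rewrite <- (Rmult_0_r (b - a)), <- RInt_const_R.
  apply RInt_le; auto; try (apply ex_RInt_continuity; auto).
  - intros; apply continuity_pt_const; intros ? ?; reflexivity.
  - intros x Hx; apply Hp; lra.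
Qed.

Lemma RInt_eq0_nonneg_continuity (f : R -> R) a b : a < b -> (forall x, continuity_pt f x) ->
  (forall x, a <= x <= b -> 0 <= f x) -> RInt f a b = 0 ->
  forall x, a <= x <= b -> f x = 0.
Proof.
  intros Hab Hc Hp Hi x1 Hx1.
  destruct (Rle_lt_or_eq_dec 0 (f x1) (Hp x1 Hx1)) as [Hpos|]; auto. exfalso.
  destruct (Hc x1 (f x1 / 2)) as [d [Hd Hd2]]; [lra|].
  set (c := Rmax a (x1 - d / 2)). set (e := Rmin b (x1 + d / 2)).
  assert (Hce : a <= c /\ c < e /\ e <= b /\ x1 - d/2 <= c /\ e <= x1 + d/2).
  { unfold c, e, Rmax, Rmin; repeat destruct Rle_dec; lra. }
  assert (Hf : forall x, c <= x <= e -> f x1 / 2 <= f x).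
  { intros x Hx. destruct (Req_dec x x1) as [->|Hne]; [lra|].
    assert (Hdist : dist R_met (f x) (f x1) < f x1 / 2).
    { apply Hd2. split; [split; [exact I | auto]|]. simpl. unfold R_dist. apply Rabs_def1; lra. }
    simpl in Hdist. unfold R_dist in Hdist. apply Rabs_def2 in Hdist. lra. }
  assert (Hex : forall a b, ex_RInt f a b) by (intros; apply ex_RInt_continuity; auto).
  assert (S : RInt f a b = RInt f a c + RInt f c e + RInt f e b).
  { rewrite <- (RInt_Chasles f a c b), <- (RInt_Chasles f c e b); auto.
    unfold plus; simpl. ring. }
  assert (0 <= RInt f a c) by (apply RInt_ge0_continuity; [lra | auto | intros; apply Hp; lra]).
  assert (0 <= RInt f e b) by (apply RInt_ge0_continuity; [lra | auto | intros; apply Hp; lra]).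
  assert ((e - c) * (f x1 / 2) <= RInt f c e).
  { rewrite <- RInt_const_R. apply RInt_le; auto; try lra.
    - apply ex_RInt_continuity. intros; apply continuity_pt_const; intros ? ?; reflexivity.
    - intros; apply Hf; lra. }
  nra.
Qed.

Lemma continuity_2d_pt_restr2 (f : R -> R -> R) x y :
  continuity_2d_pt f x y -> continuity_pt (fun t => f x t) y.
Proof.
  intros H. apply continuity_pt_filterlim. intros P [eps HP].
  destruct (H eps) as [d Hd]. exists d. intros t Ht. apply HP.
  apply Hd; [rewrite Rminus_diag, Rabs_R0; apply cond_pos| exact Ht].
Qed.

Lemma ex_RInt_continuity_2d (g : R -> R -> R) r a b :
  (forall t, continuity_2d_pt g r t) -> ex_RInt (g r) a b.
Proof. intros H. apply ex_RInt_continuity. intros t. apply continuity_2d_pt_restr2, H. Qed.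

Lemma is_derive_RInt_param_continuity (f df : R -> R -> R) r a b rho : Rabs r < rho ->
  (forall s t, Rabs s < rho -> is_derive (fun z => f z t) s (df s t)) ->
  (forall s t, Rabs s < rho -> continuity_2d_pt df s t) ->
  (forall s t, Rabs s < rho -> continuity_pt (fun t => f s t) t) ->
  is_derive (fun s => RInt (f s) a b) r (RInt (df r) a b).
Proof.
  intros Hr Hd Hc Hf.
  assert (Hp : 0 < rho - Rabs r) by lra.
  assert (Hin : forall x, Rabs (x - r) < rho - Rabs r -> Rabs x < rho).
  { intros x Hx. replace x with ((x - r) + r) by ring.
    eapply Rle_lt_trans; [apply Rabs_triang| lra]. }
  replace (RInt (df r) a b) with (RInt (fun t => Derive (fun u => f u t) r) a b).
  2:{ apply RInt_ext. intros x _. apply is_derive_unique, Hd; auto. }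
  apply (is_derive_RInt_param f a b r).
  - exists (mkposreal _ Hp). intros x Hx t _. eexists. apply Hd, Hin, Hx.
  - intros t _. apply (continuity_2d_pt_ext_loc df); [| apply Hc; auto].
    exists (mkposreal _ Hp). simpl. intros u v Hu _. symmetry. apply is_derive_unique, Hd. auto.
  - exists (mkposreal _ Hp). intros x Hx. apply (ex_RInt_continuous (V := R_CompleteNormedModule)).
    intros z _. apply continuity_pt_filterlim, Hf, Hin, Hx.
Qed.

Lemma C1_differentiable (F Fx Fy : R -> R -> R) x y d : 0 < d ->
  (forall u v, Rabs (u - x) < d -> Rabs (v - y) < d ->
     is_derive (fun t => F t v) u (Fx u v) /\ is_derive (fun t => F u t) v (Fy u v)) ->
  continuity_2d_pt Fx x y -> continuity_2d_pt Fy x y ->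
  differentiable_pt_lim F x y (Fx x y) (Fy x y).
Proof.
  intros Hd HD Cx Cy eps.
  assert (He2 : 0 < eps / 2) by (destruct eps; simpl; lra).
  destruct (Cx (mkposreal _ He2)) as [d1 H1].
  destruct (Cy (mkposreal _ He2)) as [d2 H2]. simpl in H1, H2.
  assert (Hm : 0 < Rmin d (Rmin d1 d2)) by (destruct d1, d2; simpl; repeat apply Rmin_pos; lra).
  exists (mkposreal _ Hm). simpl. intros u v Hu Hv.
  assert (Hu1 : Rabs (u - x) < d /\ Rabs (u - x) < d1 /\ Rabs (u - x) < d2)
    by (revert Hu; unfold Rmin; repeat destruct Rle_dec; lra).
  assert (Hv1 : Rabs (v - y) < d /\ Rabs (v - y) < d1 /\ Rabs (v - y) < d2)
    by (revert Hv; unfold Rmin; repeat destruct Rle_dec; lra).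
  (* mean value theorem along the horizontal, then the vertical, side of the rectangle *)
  destruct (MVT_cor4 (fun t => F t v) (fun t => Fx t v) x (Rabs (u - x))) with (b := u)
    as [c [Ec Hc]]; [intros c Hc; apply HD; lra | lra |].
  destruct (MVT_cor4 (fun t => F x t) (fun t => Fy x t) y (Rabs (v - y))) with (b := v)
    as [e [Ee He]]; [intros e He; apply HD; [rewrite Rminus_diag, Rabs_R0|]; lra | lra |].
  assert (B1 : Rabs (Fx c v - Fx x y) < eps / 2) by (apply H1; lra).
  assert (B2 : Rabs (Fy x e - Fy x y) < eps / 2)
    by (apply H2; [rewrite Rminus_diag, Rabs_R0; destruct d2; simpl |]; lra).
  replace (F u v - F x y - (Fx x y * (u - x) + Fy x y * (v - y)))
    with ((Fx c v - Fx x y) * (u - x) + (Fy x e - Fy x y) * (v - y)) by lra.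
  eapply Rle_trans; [apply Rabs_triang|]. rewrite !Rabs_mult.
  pose proof (Rmax_l (Rabs (u - x)) (Rabs (v - y))).
  pose proof (Rmax_r (Rabs (u - x)) (Rabs (v - y))).
  pose proof (Rabs_pos (u - x)). pose proof (Rabs_pos (v - y)).
  nra.
Qed.

(** * Circle means and the strong minimum principle *)

Section RadialInequality.

Variables (M I1 I2 : R -> R) (rho C : R).
Hypothesis C_ge0 : 0 <= C.
Hypothesis M_derive : forall t, Rabs t < rho -> is_derive M t (I1 t).
Hypothesis I1_derive : forall t, Rabs t < rho -> is_derive I1 t (I2 t).
Hypothesis radial_ineq : forall t, 0 < t < rho -> t ^ 2 * I2 t + t * I1 t <= C * t ^ 2 * M t.

Lemma radial_flux_bound ts Ms : 0 < ts < rho -> (forall t, 0 <= t <= ts -> M t <= Ms) ->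
  forall t, 0 < t <= ts -> I1 t <= C * t * Ms / 2.
Proof.
  intros Hts HMs t Ht.
  (* [t I1 t] is the flux [t M'(t)], whose derivative is [t] times the mean Laplacian *)
  set (psi := fun s => s * I1 s - C * s ^ 2 * Ms / 2).
  assert (Hpsi : psi t <= psi 0).
  { apply (nonincreasing_of_derive_nonpos psi (fun s => I1 s + s * I2 s - C * s * Ms)); [lra | |].
    - intros x Hx. unfold psi. eapply is_derive_eq.
      + apply (is_derive_minus (fun s => s * I1 s) (fun s => C * s ^ 2 * Ms / 2)).
        * apply (is_derive_mult (fun s => s) I1); [apply is_derive_id | | intros; apply Rmult_comm].
          apply I1_derive. rewrite Rabs_pos_eq; lra.
        * auto_derive; auto.
      + unfold minus, plus, opp, mult, one; simpl. match goal with |- ?a = ?b => change (@eq R a b) end; field.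
    - intros x Hx.
      assert (x ^ 2 * I2 x + x * I1 x <= C * x ^ 2 * M x) by (apply radial_ineq; lra).
      assert (C * x ^ 2 * M x <= C * x ^ 2 * Ms).
      { apply Rmult_le_compat_l; [apply Rmult_le_pos; [lra | apply pow2_ge_0] | apply HMs; lra]. }
      apply Rmult_le_reg_l with x; [lra|]. nra. }
  unfold psi in Hpsi.
  apply Rmult_le_reg_l with t; [lra|]. nra.
Qed.

Lemma radial_mean_vanishes : 0 < rho ->
  (forall t, Rabs t < rho -> 0 <= M t) -> M 0 = 0 ->
  exists r0, 0 < r0 < rho /\ forall t, 0 <= t <= r0 -> M t = 0.
Proof.
  intros Hrho Mpos M0.
  (* on [0, r0] the maximum [Ms] of [M] satisfies [Ms <= C r0^2 Ms / 4] with [C r0^2 < 1] *)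
  set (r0 := Rmin (rho / 2) (1 / (C + 1))).
  assert (Hr0 : 0 < r0 /\ r0 < rho /\ r0 * (C + 1) <= 1).
  { assert (0 < 1 / (C + 1)) by (apply Rdiv_lt_0_compat; lra).
    assert (1 / (C + 1) * (C + 1) = 1) by (field; lra).
    unfold r0, Rmin; destruct Rle_dec; repeat split; nra. }
  assert (Hin : forall t, 0 <= t <= r0 -> Rabs t < rho) by (intros t Ht; rewrite Rabs_pos_eq; lra).
  destruct (continuity_ab_maj M 0 r0) as [ts [Hts Hts2]]; [lra | |].
  { intros t Ht. apply (is_derive_continuity_pt M t (I1 t)), M_derive, Hin; auto. }
  assert (Ms0 : 0 <= M ts) by (apply Mpos, Hin; auto).
  assert (Mts : M ts <= 0).
  { destruct (Req_dec ts 0) as [->|Hne]; [lra|].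
    set (phi := fun s => M s - C * s ^ 2 * M ts / 4).
    assert (phi ts <= phi 0).
    { apply (nonincreasing_of_derive_nonpos phi (fun s => I1 s - C * s * M ts / 2)); [lra| |].
      - intros x Hx. unfold phi. eapply is_derive_eq.
        + apply (is_derive_minus M (fun s => C * s ^ 2 * M ts / 4));
            [apply M_derive, Hin; lra | auto_derive; auto].
        + unfold minus, plus, opp, mult, one; simpl. match goal with |- ?a = ?b => change (@eq R a b) end; field.
      - intros x Hx. assert (I1 x <= C * x * M ts / 2); [|lra].
        apply (radial_flux_bound ts); [lra | intros; apply Hts; lra | lra]. }
    unfold phi in *. rewrite M0 in *.
    assert (C * ts ^ 2 <= C * r0 ^ 2) by (apply Rmult_le_compat_l; auto; apply pow_incr; lra).
    assert (C * r0 ^ 2 < 1) by nra.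
    replace (0 ^ 2) with 0 in * by ring. nra. }
  exists r0. split; [lra|]. intros t Ht.
  assert (M t <= M ts) by (apply Hts; auto). assert (0 <= M t) by (apply Mpos, Hin; auto). lra.
Qed.

End RadialInequality.

Lemma continuity_2d_pt_comp2 (G a b : R -> R -> R) r th :
  continuity_2d_pt G (a r th) (b r th) -> continuity_2d_pt a r th -> continuity_2d_pt b r th ->
  continuity_2d_pt (fun r th => G (a r th) (b r th)) r th.
Proof.
  intros HG Ha Hb eps. destruct (HG eps) as [d Hd].
  destruct (Ha d) as [d1 H1]. destruct (Hb d) as [d2 H2].
  exists (mkposreal _ (Rmin_pos _ _ (cond_pos d1) (cond_pos d2))). simpl. intros r' th' Hr Hth.
  apply Hd; [apply H1 | apply H2]; eapply Rlt_le_trans; eauto using Rmin_l, Rmin_r.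
Qed.

Lemma continuity_2d_pt_cos r th : continuity_2d_pt (fun _ t => cos t) r th.
Proof.
  apply (continuity_1d_2d_pt_comp cos (fun _ t => t)); [apply continuity_cos | apply continuity_2d_pt_id2].
Qed.

Lemma continuity_2d_pt_sin r th : continuity_2d_pt (fun _ t => sin t) r th.
Proof.
  apply (continuity_1d_2d_pt_comp sin (fun _ t => t)); [apply continuity_sin | apply continuity_2d_pt_id2].
Qed.

Lemma continuity_2d_pt_exp (f : R -> R -> R) x y : continuity_2d_pt f x y ->
  continuity_2d_pt (fun a b => exp (f a b)) x y.
Proof.
  intros H. apply (continuity_1d_2d_pt_comp exp f); auto.
  apply derivable_continuous_pt, derivable_pt_exp.
Qed.

Lemma continuity_2d_pt_pow (f : R -> R -> R) n x y : continuity_2d_pt f x y ->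
  continuity_2d_pt (fun a b => f a b ^ n) x y.
Proof.
  intros H. apply (continuity_1d_2d_pt_comp (fun z => z ^ n) f); auto.
  apply derivable_continuous_pt, derivable_pt_pow.
Qed.

Ltac continuity_2d := repeat first
  [ apply continuity_2d_pt_plus | apply continuity_2d_pt_minus
  | apply continuity_2d_pt_mult | apply continuity_2d_pt_opp
  | apply continuity_2d_pt_exp | apply continuity_2d_pt_pow
  | apply continuity_2d_pt_cos | apply continuity_2d_pt_sin
  | apply continuity_2d_pt_id1 | apply continuity_2d_pt_id2
  | apply continuity_2d_pt_const | assumption ].

Lemma polar_coordinates dx dy : exists t th,
  0 <= t /\ t ^ 2 = dx ^ 2 + dy ^ 2 /\ 0 <= th <= 2 * PI /\ dx = t * cos th /\ dy = t * sin th.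
Proof.
  pose proof (pow2_ge_0 dx). pose proof (pow2_ge_0 dy). pose proof PI_RGT_0.
  set (t := sqrt (dx ^ 2 + dy ^ 2)).
  assert (Ht0 : 0 <= t) by apply sqrt_pos.
  assert (Ht2 : t ^ 2 = dx ^ 2 + dy ^ 2) by (apply pow2_sqrt; lra).
  destruct (Req_dec t 0) as [Tz|Tnz].
  - exists 0, 0. rewrite Tz in Ht2. repeat split; try lra; nra.
  - set (c := dx / t).
    assert (Hc2 : t ^ 2 * (1 - c ^ 2) = dy ^ 2) by (unfold c; field_simplify; lra).
    assert (0 < t ^ 2) by (apply pow_lt; lra).
    assert (c ^ 2 <= 1) by nra.
    assert (Hc : -1 <= c <= 1) by (split; nra).
    (* [t sin (acos c) = t sqrt (1 - c^2) = |dy|] fixes the angle up to the sign of [dy] *)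
    assert (Hts : t * sin (acos c) = Rabs dy).
    { rewrite sin_acos, <- (sqrt_pow2 t), <- sqrt_mult_alt, Rsqr_pow2, Hc2 by (auto; apply pow2_ge_0).
      rewrite <- Rsqr_pow2. apply sqrt_Rsqr_abs. }
    assert (Htc : t * cos (acos c) = dx) by (rewrite cos_acos by auto; unfold c; field; lra).
    pose proof (acos_bound c).
    destruct (Rle_lt_dec 0 dy) as [Hy|Hy].
    + exists t, (acos c). rewrite Rabs_pos_eq in Hts by lra. repeat split; auto; lra.
    + exists t, (2 * PI - acos c). rewrite Rabs_left in Hts by lra.
      rewrite cos_minus, sin_minus, cos_2PI, sin_2PI. repeat split; auto; try lra; nra.
Qed.

Section Polar.

Variables x0 y0 rho : R.

Definition polar (G : R -> R -> R) : R -> R -> R :=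
  fun r th => G (x0 + r * cos th) (y0 + r * sin th).

Definition C1_box (G Gx Gy : R -> R -> R) :=
  forall u v, Rabs (u - x0) < rho -> Rabs (v - y0) < rho ->
    is_derive (fun t => G t v) u (Gx u v) /\ is_derive (fun t => G u t) v (Gy u v) /\
    continuity_2d_pt Gx u v /\ continuity_2d_pt Gy u v.

Definition C2_box (G Gx Gy Gxx Gxy Gyx Gyy : R -> R -> R) :=
  C1_box G Gx Gy /\ C1_box Gx Gxx Gxy /\ C1_box Gy Gyx Gyy.

Lemma polar_in_box r th : Rabs r < rho ->
  Rabs (x0 + r * cos th - x0) < rho /\ Rabs (y0 + r * sin th - y0) < rho.
Proof.
  intros H.
  assert (Rabs (cos th) <= 1) by (apply Rabs_le; pose proof (COS_bound th); lra).
  assert (Rabs (sin th) <= 1) by (apply Rabs_le; pose proof (SIN_bound th); lra).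
  pose proof (Rabs_pos r).
  replace (x0 + r * cos th - x0) with (r * cos th) by ring.
  replace (y0 + r * sin th - y0) with (r * sin th) by ring.
  rewrite !Rabs_mult. split; nra.
Qed.

Lemma continuity_2d_pt_polar G r th :
  continuity_2d_pt G (x0 + r * cos th) (y0 + r * sin th) -> continuity_2d_pt (polar G) r th.
Proof. intros HG. apply (continuity_2d_pt_comp2 G); auto; continuity_2d. Qed.

Lemma C1_box_differentiable G Gx Gy u v : C1_box G Gx Gy ->
  Rabs (u - x0) < rho -> Rabs (v - y0) < rho ->
  differentiable_pt_lim G u v (Gx u v) (Gy u v).
Proof.
  intros HC Hu Hv.
  set (d := Rmin (rho - Rabs (u - x0)) (rho - Rabs (v - y0))).
  assert (Hd : 0 < d /\ d <= rho - Rabs (u - x0) /\ d <= rho - Rabs (v - y0))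
    by (unfold d, Rmin; destruct Rle_dec; lra).
  apply (C1_differentiable G Gx Gy u v d); try lra; try apply (HC u v); auto.
  intros a b Ha Hb.
  assert (Rabs (a - x0) < rho).
  { replace (a - x0) with ((a - u) + (u - x0)) by ring.
    eapply Rle_lt_trans; [apply Rabs_triang| lra]. }
  assert (Rabs (b - y0) < rho).
  { replace (b - y0) with ((b - v) + (v - y0)) by ring.
    eapply Rle_lt_trans; [apply Rabs_triang| lra]. }
  destruct (HC a b) as [A [B _]]; auto.
Qed.

Lemma C1_box_continuity G Gx Gy u v : C1_box G Gx Gy ->
  Rabs (u - x0) < rho -> Rabs (v - y0) < rho -> continuity_2d_pt G u v.
Proof.
  intros HC Hu Hv. apply differentiable_continuity_pt.
  do 2 eexists. apply (C1_box_differentiable G Gx Gy); eauto.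
Qed.

Lemma is_derive_polar_r G Gx Gy r th : C1_box G Gx Gy -> Rabs r < rho ->
  is_derive (fun s => polar G s th) r (cos th * polar Gx r th + sin th * polar Gy r th).
Proof.
  intros HC Hr. destruct (polar_in_box r th Hr) as [A B].
  apply is_derive_Reals. unfold polar.
  rewrite (Rmult_comm (cos th)), (Rmult_comm (sin th)).
  apply (derivable_pt_lim_comp_2d G (fun s => x0 + s * cos th) (fun s => y0 + s * sin th)).
  - apply (C1_box_differentiable G Gx Gy); auto.
  - apply is_derive_Reals. auto_derive; auto; ring.
  - apply is_derive_Reals. auto_derive; auto; ring.
Qed.

Lemma is_derive_polar_th G Gx Gy r th : C1_box G Gx Gy -> Rabs r < rho ->
  is_derive (fun t => polar G r t) th
    (- r * sin th * polar Gx r th + r * cos th * polar Gy r th).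
Proof.
  intros HC Hr. destruct (polar_in_box r th Hr) as [A B].
  apply is_derive_Reals. unfold polar.
  rewrite (Rmult_comm (- r * sin th)), (Rmult_comm (r * cos th)).
  apply (derivable_pt_lim_comp_2d G (fun t => x0 + r * cos t) (fun t => y0 + r * sin t)).
  - apply (C1_box_differentiable G Gx Gy); auto.
  - apply is_derive_Reals. auto_derive; auto; ring.
  - apply is_derive_Reals. auto_derive; auto; ring.
Qed.

Definition dr_polar (Gx Gy : R -> R -> R) r th :=
  cos th * polar Gx r th + sin th * polar Gy r th.

Definition drr_polar (Gxx Gxy Gyx Gyy : R -> R -> R) r th :=
  cos th * (cos th * polar Gxx r th + sin th * polar Gxy r th) +
  sin th * (cos th * polar Gyx r th + sin th * polar Gyy r th).

Definition dth_polar (Gx Gy : R -> R -> R) r th :=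
  - r * sin th * polar Gx r th + r * cos th * polar Gy r th.

Definition dthth_polar (Gx Gy Gxx Gxy Gyx Gyy : R -> R -> R) r th :=
  (- r * cos th * polar Gx r th +
   - r * sin th * (- r * sin th * polar Gxx r th + r * cos th * polar Gxy r th)) +
  (- r * sin th * polar Gy r th +
   r * cos th * (- r * sin th * polar Gyx r th + r * cos th * polar Gyy r th)).

Lemma polar_laplacian Gx Gy Gxx Gxy Gyx Gyy r th :
  r ^ 2 * drr_polar Gxx Gxy Gyx Gyy r th + r * dr_polar Gx Gy r th
  + dthth_polar Gx Gy Gxx Gxy Gyx Gyy r th
  = r ^ 2 * (polar Gxx r th + polar Gyy r th).
Proof.
  unfold drr_polar, dr_polar, dthth_polar. pose proof (sin2_cos2 th) as E. unfold Rsqr in E.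
  set (s := sin th) in *. set (k := cos th) in *.
  replace (r ^ 2 * (polar Gxx r th + polar Gyy r th))
    with (r ^ 2 * (polar Gxx r th + polar Gyy r th) * (s * s + k * k)) by (rewrite E; ring).
  ring.
Qed.

Section CircleMean.

Variables Q Qx Qy Qxx Qxy Qyx Qyy : R -> R -> R.
Hypothesis Q_C2 : C2_box Q Qx Qy Qxx Qxy Qyx Qyy.

Lemma is_derive_dr_polar r th : Rabs r < rho ->
  is_derive (fun s => dr_polar Qx Qy s th) r (drr_polar Qxx Qxy Qyx Qyy r th).
Proof.
  destruct Q_C2 as [_ [Cx Cy]]. intros Hr. unfold dr_polar, drr_polar.
  apply (is_derive_plus (fun s => cos th * polar Qx s th) (fun s => sin th * polar Qy s th));
    apply is_derive_scal; apply (is_derive_polar_r _ _ _ r th); auto.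
Qed.

Lemma is_derive_dth_polar r th : Rabs r < rho ->
  is_derive (fun t => dth_polar Qx Qy r t) th (dthth_polar Qx Qy Qxx Qxy Qyx Qyy r th).
Proof.
  destruct Q_C2 as [_ [Cx Cy]]. intros Hr. unfold dth_polar, dthth_polar.
  apply (is_derive_plus (fun t => - r * sin t * polar Qx r t) (fun t => r * cos t * polar Qy r t)).
  - eapply is_derive_eq.
    + apply (is_derive_mult (fun t => - r * sin t) (fun t => polar Qx r t));
        [auto_derive; auto | apply (is_derive_polar_th Qx Qxx Qxy); auto | intros; apply Rmult_comm].
    + unfold plus, mult; simpl. ring.
  - eapply is_derive_eq.
    + apply (is_derive_mult (fun t => r * cos t) (fun t => polar Qy r t));
        [auto_derive; auto | apply (is_derive_polar_th Qy Qyx Qyy); auto | intros; apply Rmult_comm].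
    + unfold plus, mult; simpl. ring.
Qed.

Lemma polar_integrands_continuous r th : Rabs r < rho ->
  continuity_2d_pt (polar Q) r th /\
  continuity_2d_pt (dr_polar Qx Qy) r th /\
  continuity_2d_pt (drr_polar Qxx Qxy Qyx Qyy) r th /\
  continuity_2d_pt (dthth_polar Qx Qy Qxx Qxy Qyx Qyy) r th /\
  continuity_2d_pt (fun r th => polar Qxx r th + polar Qyy r th) r th.
Proof.
  destruct Q_C2 as [C0 [Cx Cy]]. intros Hr. destruct (polar_in_box r th Hr) as [A B].
  destruct (C0 _ _ A B) as [_ [_ [Kx Ky]]].
  destruct (Cx _ _ A B) as [_ [_ [Kxx Kxy]]].
  destruct (Cy _ _ A B) as [_ [_ [Kyx Kyy]]].
  pose proof (C1_box_continuity Q Qx Qy _ _ C0 A B) as K.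
  apply continuity_2d_pt_polar in K, Kx, Ky, Kxx, Kxy, Kyx, Kyy.
  unfold dr_polar, drr_polar, dthth_polar. repeat split; continuity_2d.
Qed.

Lemma RInt_dthth_polar r : Rabs r < rho ->
  RInt (dthth_polar Qx Qy Qxx Qxy Qyx Qyy r) 0 (2 * PI) = 0.
Proof.
  intros Hr.
  assert (HH : is_RInt (dthth_polar Qx Qy Qxx Qxy Qyx Qyy r) 0 (2 * PI)
      (minus (dth_polar Qx Qy r (2 * PI)) (dth_polar Qx Qy r 0))).
  { apply (is_RInt_derive (V := R_CompleteNormedModule)).
    - intros x _. apply is_derive_dth_polar; auto.
    - intros x _. apply continuity_pt_filterlim, continuity_2d_pt_restr2.
      apply polar_integrands_continuous; auto. }
  apply (is_RInt_unique (V := R_CompleteNormedModule)) in HH. rewrite HH.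
  unfold dth_polar, polar. rewrite cos_2PI, sin_2PI, cos_0, sin_0.
  unfold minus, plus, opp; simpl. ring.
Qed.

Definition circle_mean (G : R -> R -> R) r := RInt (polar G r) 0 (2 * PI).

Lemma circle_mean_supersolution C r :
  (forall u v, Rabs (u - x0) < rho -> Rabs (v - y0) < rho -> Qxx u v + Qyy u v <= C * Q u v) ->
  0 < r < rho ->
  r ^ 2 * RInt (drr_polar Qxx Qxy Qyx Qyy r) 0 (2 * PI) + r * RInt (dr_polar Qx Qy r) 0 (2 * PI)
  <= C * r ^ 2 * circle_mean Q r.
Proof.
  intros HL Hr. unfold circle_mean.
  assert (Hr' : Rabs r < rho) by (rewrite Rabs_pos_eq; lra).
  assert (CD := fun t => polar_integrands_continuous r t Hr').
  assert (Hex : forall g : R -> R -> R, (forall t, continuity_2d_pt g r t) -> ex_RInt (g r) 0 (2 * PI))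
    by (intros g Hg; apply (ex_RInt_continuity_2d g r 0 (2 * PI) Hg)).
  rewrite <- RInt_lincomb by (apply Hex; apply CD).
  rewrite (RInt_ext_R _ (fun t => r ^ 2 * (polar Qxx r t + polar Qyy r t)
                               + (-1) * dthth_polar Qx Qy Qxx Qxy Qyx Qyy r t))
    by (intros t; rewrite <- (polar_laplacian Qx Qy Qxx Qxy Qyx Qyy r t); ring).
  rewrite RInt_lincomb, RInt_dthth_polar by
    (auto; apply (Hex (fun r t => polar Qxx r t + polar Qyy r t)) || apply Hex; apply CD).
  assert (RInt (fun t => polar Qxx r t + polar Qyy r t) 0 (2 * PI) <= C * RInt (polar Q r) 0 (2 * PI)).
  { rewrite <- (RInt_scal (V := R_CompleteNormedModule)) by (apply Hex; apply CD).
    apply RInt_le; [pose proof PI_RGT_0; lra | apply (Hex (fun r t => polar Qxx r t + polar Qyy r t)); apply CD | |].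
    - apply ex_RInt_continuity. intros t. apply continuity_pt_mult;
        [apply continuity_pt_const; intros ? ?; reflexivity | apply continuity_2d_pt_restr2, CD].
    - intros t _. destruct (polar_in_box r t Hr') as [A B]. apply HL; auto. }
  assert (0 <= r ^ 2) by apply pow2_ge_0. nra.
Qed.

Lemma strong_minimum_principle C : 0 < rho -> 0 <= C ->
  (forall u v, Rabs (u - x0) < rho -> Rabs (v - y0) < rho ->
     0 <= Q u v /\ Qxx u v + Qyy u v <= C * Q u v) ->
  Q x0 y0 = 0 ->
  exists r0, 0 < r0 /\ forall x y, (x - x0) ^ 2 + (y - y0) ^ 2 <= r0 ^ 2 -> Q x y = 0.
Proof.
  intros Hrho HC HL HQ0.
  assert (HPI := PI_RGT_0).
  assert (CD := polar_integrands_continuous).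
  assert (Qnonneg : forall t th, Rabs t < rho -> 0 <= polar Q t th)
    by (intros t th Ht; destruct (polar_in_box t th Ht); apply HL; auto).
  assert (HM : forall t, Rabs t < rho -> is_derive (circle_mean Q) t (RInt (dr_polar Qx Qy t) 0 (2 * PI))).
  { intros t Ht. apply (is_derive_RInt_param_continuity (polar Q) (dr_polar Qx Qy) t 0 (2 * PI) rho Ht).
    - intros s th Hs. apply (is_derive_polar_r Q Qx Qy); [apply Q_C2 | auto].
    - intros s th Hs. apply CD; auto.
    - intros s th Hs. apply continuity_2d_pt_restr2, CD; auto. }
  assert (HI : forall t, Rabs t < rho -> is_derive (fun t => RInt (dr_polar Qx Qy t) 0 (2 * PI)) t
                                         (RInt (drr_polar Qxx Qxy Qyx Qyy t) 0 (2 * PI))).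
  { intros t Ht. apply (is_derive_RInt_param_continuity (dr_polar Qx Qy) _ t 0 (2 * PI) rho Ht).
    - intros s th Hs. apply is_derive_dr_polar; auto.
    - intros s th Hs. apply CD; auto.
    - intros s th Hs. apply continuity_2d_pt_restr2, CD; auto. }
  destruct (radial_mean_vanishes (circle_mean Q) _ _ rho C HC HM HI) as [r0 [Hr0 Hz]]; auto.
  - intros t Ht. apply (circle_mean_supersolution C t); auto. intros u v Hu Hv; apply HL; auto.
  - intros t Ht. apply RInt_ge0_continuity; [lra | | intros; apply Qnonneg; auto].
    intros th. apply continuity_2d_pt_restr2, CD; auto.
  - unfold circle_mean, polar. rewrite (RInt_ext_R _ (fun _ => 0)), RInt_const_R; [ring|].
    intros th. rewrite !Rmult_0_l, !Rplus_0_r. auto.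
  - exists r0. split; [lra|]. intros x y Hxy.
    destruct (polar_coordinates (x - x0) (y - y0)) as [t [th [Ht0 [Ht2 [Hth [Ex Ey]]]]]].
    assert (Htr0 : t <= r0) by nra.
    assert (Htr : Rabs t < rho) by (rewrite Rabs_pos_eq; lra).
    replace (Q x y) with (polar Q t th) by (unfold polar; f_equal; lra).
    apply (RInt_eq0_nonneg_continuity (polar Q t) 0 (2 * PI)); [lra | | | | lra].
    + intros th'. apply continuity_2d_pt_restr2, CD; auto.
    + intros th' _. apply Qnonneg; auto.
    + apply Hz; lra.
Qed.

End CircleMean.

End Polar.

(** * The lattice of periods *)

Lemma shift_invariant_nat (S : R -> R -> Prop) (u : R -> R -> R) a b :
  (forall x y, S (x + a) (y + b) <-> S x y) ->
  (forall x y, ~ S x y -> u (x + a) (y + b) = u x y) ->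
  forall (n : nat) x y, (S (x + INR n * a) (y + INR n * b) <-> S x y) /\
    (~ S x y -> u (x + INR n * a) (y + INR n * b) = u x y).
Proof.
  intros HS Hu n. induction n as [|n IH]; intros x y.
  - simpl. rewrite !Rmult_0_l, !Rplus_0_r. tauto.
  - rewrite S_INR.
    replace (x + (INR n + 1) * a) with ((x + INR n * a) + a) by ring.
    replace (y + (INR n + 1) * b) with ((y + INR n * b) + b) by ring.
    destruct (IH x y) as [IHS IHu]. rewrite HS, IHS. split; [tauto|].
    intros Hn. rewrite Hu, IHu; auto. rewrite IHS. auto.
Qed.

Lemma shift_invariant_Z (S : R -> R -> Prop) (u : R -> R -> R) a b :
  (forall x y, S (x + a) (y + b) <-> S x y) ->
  (forall x y, ~ S x y -> u (x + a) (y + b) = u x y) ->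
  forall (m : Z) x y, (S (x + IZR m * a) (y + IZR m * b) <-> S x y) /\
    (~ S x y -> u (x + IZR m * a) (y + IZR m * b) = u x y).
Proof.
  intros HS Hu m x y.
  destruct (Z_le_gt_dec 0 m) as [Hm|Hm].
  - rewrite <- (Z2Nat.id m), <- INR_IZR_INZ by lia. apply shift_invariant_nat; auto.
  - replace m with (- Z.of_nat (Z.to_nat (- m)))%Z by lia.
    rewrite opp_IZR, <- INR_IZR_INZ.
    assert (HS' : forall x y, S (x + - a) (y + - b) <-> S x y).
    { intros x' y'. rewrite <- (HS (x' + - a) (y' + - b)).
      replace (x' + - a + a) with x' by ring. replace (y' + - b + b) with y' by ring. tauto. }
    assert (Hu' : forall x y, ~ S x y -> u (x + - a) (y + - b) = u x y).
    { intros x' y' Hn'. rewrite <- (Hu (x' + - a) (y' + - b)); [| rewrite HS'; auto].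
      replace (x' + - a + a) with x' by ring. replace (y' + - b + b) with y' by ring. auto. }
    replace (- INR (Z.to_nat (- m)) * a) with (INR (Z.to_nat (- m)) * - a) by ring.
    replace (- INR (Z.to_nat (- m)) * b) with (INR (Z.to_nat (- m)) * - b) by ring.
    apply shift_invariant_nat; auto.
Qed.

Section Lattice.

Variables w1 w2 : R * R.

Definition lattice_x (m k : Z) := IZR m * fst w1 + IZR k * fst w2.
Definition lattice_y (m k : Z) := IZR m * snd w1 + IZR k * snd w2.

Lemma lattice_equiv_refl a : lattice_equiv w1 w2 a a.
Proof. exists 0%Z, 0%Z. split; ring. Qed.

Lemma lattice_equiv_sym a b : lattice_equiv w1 w2 a b -> lattice_equiv w1 w2 b a.
Proof. intros [m [k [H1 H2]]]. exists (- m)%Z, (- k)%Z. rewrite !opp_IZR. split; lra. Qed.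

Lemma lattice_equiv_trans a b c :
  lattice_equiv w1 w2 a b -> lattice_equiv w1 w2 b c -> lattice_equiv w1 w2 a c.
Proof.
  intros [m [k [H1 H2]]] [m' [k' [H3 H4]]]. exists (m + m')%Z, (k + k')%Z.
  rewrite !plus_IZR. split; lra.
Qed.

Lemma lattice_equiv_shift x y m k :
  lattice_equiv w1 w2 (x + lattice_x m k, y + lattice_y m k) (x, y).
Proof. exists m, k. unfold lattice_x, lattice_y; simpl. split; ring. Qed.

Variable ps : list (R * R).

Lemma singular_shift x y m k :
  singular w1 w2 ps (x + lattice_x m k) (y + lattice_y m k) <-> singular w1 w2 ps x y.
Proof.
  split; intros [p [Hp He]]; exists p; split; auto.
  - eapply lattice_equiv_trans; [apply lattice_equiv_sym, lattice_equiv_shift | exact He].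
  - eapply lattice_equiv_trans; [apply lattice_equiv_shift | exact He].
Qed.

Lemma solution_periodic lam u : is_solution w1 w2 ps lam u ->
  forall m k x y, ~ singular w1 w2 ps x y ->
    u (x + lattice_x m k) (y + lattice_y m k) = u x y.
Proof.
  intros [Hper _] m k x y Hn.
  assert (S1 : forall x y, singular w1 w2 ps (x + fst w1) (y + snd w1) <-> singular w1 w2 ps x y).
  { intros x' y'. rewrite <- (singular_shift x' y' 1 0). unfold lattice_x, lattice_y.
    simpl. rewrite !Rmult_1_l, !Rmult_0_l, !Rplus_0_r. tauto. }
  assert (S2 : forall x y, singular w1 w2 ps (x + fst w2) (y + snd w2) <-> singular w1 w2 ps x y).
  { intros x' y'. rewrite <- (singular_shift x' y' 0 1). unfold lattice_x, lattice_y.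
    simpl. rewrite !Rmult_1_l, !Rmult_0_l, !Rplus_0_l. tauto. }
  destruct (shift_invariant_Z _ u _ _ S2 (fun x y H => proj2 (Hper x y H)) k x y) as [Hk Huk].
  destruct (shift_invariant_Z _ u _ _ S1 (fun x y H => proj1 (Hper x y H)) m
              (x + IZR k * fst w2) (y + IZR k * snd w2)) as [_ Hum].
  unfold lattice_x, lattice_y.
  replace (x + (IZR m * fst w1 + IZR k * fst w2)) with ((x + IZR k * fst w2) + IZR m * fst w1) by ring.
  replace (y + (IZR m * snd w1 + IZR k * snd w2)) with ((y + IZR k * snd w2) + IZR m * snd w1) by ring.
  rewrite Hum, Huk; auto. rewrite Hk. auto.
Qed.

Hypothesis det_nonzero : fst w1 * snd w2 - snd w1 * fst w2 <> 0.

Definition lattice_size := Rabs (fst w1) + Rabs (fst w2) + Rabs (snd w1) + Rabs (snd w2).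

Lemma lattice_size_ge0 : 0 <= lattice_size.
Proof.
  unfold lattice_size. pose proof (Rabs_pos (fst w1)). pose proof (Rabs_pos (fst w2)).
  pose proof (Rabs_pos (snd w1)). pose proof (Rabs_pos (snd w2)). lra.
Qed.

Lemma IZR_abs_lt1 (m : Z) : Rabs (IZR m) < 1 -> m = 0%Z.
Proof.
  intros H. apply Rabs_def2 in H. destruct H as [H1 H2].
  rewrite <- opp_IZR in H2. apply lt_IZR in H1, H2. lia.
Qed.

Lemma lattice_discrete : exists kap, 0 < kap /\
  forall m k, Rabs (lattice_x m k) < kap -> Rabs (lattice_y m k) < kap -> m = 0%Z /\ k = 0%Z.
Proof.
  set (D := fst w1 * snd w2 - snd w1 * fst w2) in *.
  assert (HaD : 0 < Rabs D) by (apply Rabs_pos_lt; auto).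
  pose proof lattice_size_ge0.
  exists (Rabs D / (1 + lattice_size)). split; [apply Rdiv_lt_0_compat; lra|].
  intros m k Hx Hy. unfold lattice_x, lattice_y in *.
  set (vx := IZR m * fst w1 + IZR k * fst w2) in *.
  set (vy := IZR m * snd w1 + IZR k * snd w2) in *.
  (* Cramer's rule recovers [m] and [k] from [vx] and [vy] *)
  assert (Em : IZR m * D = vx * snd w2 - vy * fst w2) by (unfold vx, vy, D; ring).
  assert (Ek : IZR k * D = fst w1 * vy - snd w1 * vx) by (unfold vx, vy, D; ring).
  assert (Hk : Rabs D / (1 + lattice_size) * (1 + lattice_size) = Rabs D) by (field; lra).
  unfold lattice_size in *.
  pose proof (Rabs_pos (fst w1)). pose proof (Rabs_pos (fst w2)).
  pose proof (Rabs_pos (snd w1)). pose proof (Rabs_pos (snd w2)).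
  pose proof (Rabs_pos vx). pose proof (Rabs_pos vy).
  split; apply IZR_abs_lt1.
  - assert (Rabs (IZR m) * Rabs D <= Rabs vx * Rabs (snd w2) + Rabs vy * Rabs (fst w2)).
    { rewrite <- Rabs_mult, Em, <- !Rabs_mult.
      unfold Rminus. eapply Rle_trans; [apply Rabs_triang|]. rewrite Rabs_Ropp. lra. }
    nra.
  - assert (Rabs (IZR k) * Rabs D <= Rabs (fst w1) * Rabs vy + Rabs (snd w1) * Rabs vx).
    { rewrite <- Rabs_mult, Ek, <- !Rabs_mult.
      unfold Rminus. eapply Rle_trans; [apply Rabs_triang|]. rewrite Rabs_Ropp. lra. }
    nra.
Qed.

Lemma lattice_reduce_to_box x y : exists m k,
  Rabs (x - lattice_x m k) <= lattice_size /\ Rabs (y - lattice_y m k) <= lattice_size.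
Proof.
  set (D := fst w1 * snd w2 - snd w1 * fst w2) in *.
  set (a := (x * snd w2 - y * fst w2) / D). set (b := (fst w1 * y - snd w1 * x) / D).
  assert (Ex : x = a * fst w1 + b * fst w2) by (unfold a, b, D in *; field; auto).
  assert (Ey : y = a * snd w1 + b * snd w2) by (unfold a, b, D in *; field; auto).
  assert (Hfrac : forall c : R, 0 <= c - IZR (up c - 1) < 1)
    by (intros c; rewrite minus_IZR; destruct (archimed c); simpl; lra).
  exists (up a - 1)%Z, (up b - 1)%Z.
  pose proof (Hfrac a). pose proof (Hfrac b).
  set (m := IZR (up a - 1)) in *. set (k := IZR (up b - 1)) in *.
  unfold lattice_x, lattice_y, lattice_size. fold m k.
  pose proof (Rabs_pos (fst w1)). pose proof (Rabs_pos (fst w2)).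
  pose proof (Rabs_pos (snd w1)). pose proof (Rabs_pos (snd w2)).
  split.
  - replace (x - (m * fst w1 + k * fst w2)) with ((a - m) * fst w1 + (b - k) * fst w2)
      by (rewrite Ex; ring).
    eapply Rle_trans; [apply Rabs_triang|]. rewrite !Rabs_mult.
    rewrite (Rabs_pos_eq (a - m)), (Rabs_pos_eq (b - k)) by lra. nra.
  - replace (y - (m * snd w1 + k * snd w2)) with ((a - m) * snd w1 + (b - k) * snd w2)
      by (rewrite Ey; ring).
    eapply Rle_trans; [apply Rabs_triang|]. rewrite !Rabs_mult.
    rewrite (Rabs_pos_eq (a - m)), (Rabs_pos_eq (b - k)) by lra. nra.
Qed.

End Lattice.

Lemma list_common_radius {A} (l : list A) (P : A -> R -> Prop) :
  (forall a d d', P a d -> 0 < d' <= d -> P a d') ->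
  (forall a, In a l -> exists d, 0 < d /\ P a d) ->
  exists d, 0 < d /\ forall a, In a l -> P a d.
Proof.
  intros Hm. induction l as [|a l IH]; intros H.
  - exists 1. split; [lra| intros a []].
  - destruct (H a (or_introl eq_refl)) as [d1 [Hd1 P1]].
    destruct IH as [d2 [Hd2 P2]]; [intros b Hb; apply H; right; auto|].
    exists (Rmin d1 d2). split; [apply Rmin_pos; auto|].
    intros b [<-|Hb].
    + apply (Hm a d1); auto. split; [apply Rmin_pos; auto| apply Rmin_l].
    + apply (Hm b d2); auto. split; [apply Rmin_pos; auto| apply Rmin_r].
Qed.

Lemma log_singularity_below n s f f0 A : 1 <= n -> 0 < s < 1 -> s < exp (A - Rabs f0 - 1) ->
  Rabs (f - f0) < 1 -> n * ln s + f < A.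
Proof.
  intros Hn Hs HsA Hf.
  assert (ln s < A - Rabs f0 - 1) by (rewrite <- (ln_exp (A - Rabs f0 - 1)); apply ln_increasing; lra).
  assert (ln s < 0) by (rewrite <- ln_1; apply ln_increasing; lra).
  apply Rabs_def2 in Hf. pose proof (Rle_abs f0).
  nra.
Qed.

Section Torus.

Variables (w1 w2 : R * R) (ps : list (R * R)).
Hypothesis det_nonzero : fst w1 * snd w2 - snd w1 * fst w2 <> 0.

Lemma not_lattice_equiv_open p x0 y0 : ~ lattice_equiv w1 w2 (x0, y0) p ->
  exists d, 0 < d /\ forall x y, Rabs (x - x0) < d -> Rabs (y - y0) < d ->
    ~ lattice_equiv w1 w2 (x, y) p.
Proof.
  intros Hn. destruct (lattice_discrete w1 w2 det_nonzero) as [kap [Hk Hdisc]].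
  (* by discreteness, at most one point of the class of [p] lies within [kap / 2] of [(x0, y0)] *)
  destruct (classic (exists x1 y1, Rabs (x1 - x0) < kap / 2 /\ Rabs (y1 - y0) < kap / 2 /\
                      lattice_equiv w1 w2 (x1, y1) p)) as [[x1 [y1 [H1 [H2 H3]]]]|Hno].
  - set (e := Rmax (Rabs (x1 - x0)) (Rabs (y1 - y0))).
    assert (He : 0 < e).
    { destruct (Req_dec x1 x0) as [->|Hx].
      - destruct (Req_dec y1 y0) as [->|Hy]; [contradiction|].
        eapply Rlt_le_trans; [| apply Rmax_r]. apply Rabs_pos_lt. lra.
      - eapply Rlt_le_trans; [| apply Rmax_l]. apply Rabs_pos_lt. lra. }
    exists (Rmin (kap / 2) e). split; [apply Rmin_pos; lra|].
    intros x y Hx Hy Heq.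
    pose proof (Rmin_l (kap / 2) e). pose proof (Rmin_r (kap / 2) e).
    destruct (lattice_equiv_trans w1 w2 _ _ _ Heq (lattice_equiv_sym w1 w2 _ _ H3))
      as [m [k [E1 E2]]]. simpl in E1, E2.
    assert (Hmk : m = 0%Z /\ k = 0%Z).
    { apply Hdisc; unfold lattice_x, lattice_y; rewrite <- ?E1, <- ?E2.
      - replace (x - x1) with ((x - x0) - (x1 - x0)) by ring.
        eapply Rle_lt_trans; [apply Rabs_triang| rewrite Rabs_Ropp; lra].
      - replace (y - y1) with ((y - y0) - (y1 - y0)) by ring.
        eapply Rle_lt_trans; [apply Rabs_triang| rewrite Rabs_Ropp; lra]. }
    destruct Hmk as [-> ->]. simpl in E1, E2.
    assert (x = x1) by lra. assert (y = y1) by lra. subst x y.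
    assert (Rabs (x1 - x0) < e /\ Rabs (y1 - y0) < e) as [Hx1 Hy1] by lra.
    revert Hx1 Hy1. unfold e, Rmax. destruct Rle_dec; lra.
  - exists (kap / 2). split; [lra|]. intros x y Hx Hy He. apply Hno. exists x, y. auto.
Qed.

Lemma nonsingular_open x0 y0 : ~ singular w1 w2 ps x0 y0 ->
  exists d, 0 < d /\ forall x y, Rabs (x - x0) < d -> Rabs (y - y0) < d -> ~ singular w1 w2 ps x y.
Proof.
  intros Hn.
  destruct (list_common_radius ps (fun p d => forall x y, Rabs (x - x0) < d -> Rabs (y - y0) < d ->
                ~ lattice_equiv w1 w2 (x, y) p)) as [d [Hd Hp]].
  - intros a d d' H [H1 H2] x y Hx Hy. apply H; lra.
  - intros a Ha. apply not_lattice_equiv_open. intros He. apply Hn. exists a. auto.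
  - exists d. split; auto. intros x y Hx Hy [p [Hin He]]. apply (Hp p Hin x y Hx Hy He).
Qed.

End Torus.

Lemma multiplicity_ge1 w1 w2 ps p : In p ps -> 1 <= INR (multiplicity w1 w2 ps p).
Proof.
  intros Hin. unfold multiplicity.
  set (f := fun p0 => if excluded_middle_informative (lattice_equiv w1 w2 p0 p) then true else false).
  assert (Hf : In p (filter f ps)).
  { apply filter_In. split; auto. unfold f.
    destruct excluded_middle_informative as [|Hn]; auto. exfalso; apply Hn, lattice_equiv_refl. }
  destruct (filter f ps) as [|a l]; [destruct Hf|]. simpl length. rewrite S_INR.
  pose proof (pos_INR (length l)). lra.
Qed.

Lemma solution_below_near_singular w1 w2 ps lam u qx qy A : is_solution w1 w2 ps lam u ->
  singular w1 w2 ps qx qy ->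
  exists d, 0 < d /\ forall x y, Rabs (x - qx) < d -> Rabs (y - qy) < d ->
    ~ singular w1 w2 ps x y -> u x y < A.
Proof.
  intros Hsol [[px py] [Hin [m [k [E1 E2]]]]]. simpl in E1, E2.
  pose proof Hsol as [_ [_ [_ Hloc]]].
  destruct (Hloc _ Hin) as [r [f [Hr [Hsm Heq]]]].
  assert (Hr2 : 0 < r ^ 2) by (apply pow_lt; auto).
  assert (Hc : continuity_2d_pt f px py).
  { apply (Hsm nil). unfold dist_sq; simpl. lra. }
  destruct (Hc (mkposreal 1 Rlt_0_1)) as [df Hdf]. simpl in Hdf.
  set (s0 := Rmin (exp (A - Rabs (f px py) - 1)) (Rmin 1 (r ^ 2))).
  assert (Hs0 : 0 < s0 /\ s0 <= exp (A - Rabs (f px py) - 1) /\ s0 <= 1 /\ s0 <= r ^ 2).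
  { pose proof (exp_pos (A - Rabs (f px py) - 1)). unfold s0, Rmin; repeat destruct Rle_dec; lra. }
  set (d := Rmin df (Rmin 1 (s0 / 2))).
  assert (Hd : 0 < d /\ d <= df /\ d <= 1 /\ d <= s0 / 2).
  { pose proof (cond_pos df). unfold d, Rmin; repeat destruct Rle_dec; lra. }
  exists d. split; [lra|]. intros x y Hx Hy Hns.
  set (wx := x - lattice_x w1 w2 m k). set (wy := y - lattice_y w1 w2 m k).
  assert (Hxy : x = wx + lattice_x w1 w2 m k /\ y = wy + lattice_y w1 w2 m k)
    by (unfold wx, wy; split; ring).
  assert (Hw : ~ singular w1 w2 ps wx wy)
    by (rewrite <- (singular_shift w1 w2 ps wx wy m k), <- (proj1 Hxy), <- (proj2 Hxy); auto).
  assert (Hu : u x y = u wx wy)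
    by (rewrite <- (solution_periodic w1 w2 ps lam u Hsol m k wx wy Hw), <- (proj1 Hxy), <- (proj2 Hxy); auto).
  assert (Ex : wx - px = x - qx) by (unfold wx, lattice_x; lra).
  assert (Ey : wy - py = y - qy) by (unfold wy, lattice_y; lra).
  assert (Hd2 : 0 < dist_sq wx wy (px, py) < s0).
  { unfold dist_sq; simpl. rewrite Ex, Ey. apply Rabs_def2 in Hx. apply Rabs_def2 in Hy.
    split; [| nra].
    destruct (Req_dec x qx) as [Eqx|Nx]; [destruct (Req_dec y qy) as [Eqy|Ny]|].
    - exfalso. apply Hw. exists (px, py). split; auto.
      replace wx with px by lra. replace wy with py by lra. apply lattice_equiv_refl.
    - assert (0 < (y - qy) ^ 2) by (apply pow2_gt_0; lra). pose proof (pow2_ge_0 (x - qx)). lra.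
    - assert (0 < (x - qx) ^ 2) by (apply pow2_gt_0; lra). pose proof (pow2_ge_0 (y - qy)). lra. }
  rewrite Hu, (Heq wx wy) by lra.
  apply (log_singularity_below _ _ _ (f px py)); try lra.
  - apply multiplicity_ge1; auto.
  - apply Hdf; rewrite ?Ex, ?Ey; lra.
Qed.

(** * Existence of a maximum *)

Definition in_box B (x y : R) := Rabs x <= B /\ Rabs y <= B.

Lemma box_finite_subcover B (P : R -> R -> R -> R -> Prop) :
  (forall t1 t2, in_box B t1 t2 -> exists d : posreal, forall x y,
      Rabs (x - t1) < d -> Rabs (y - t2) < d -> P t1 t2 x y) ->
  exists l : list (R * R), forall x y, in_box B x y ->
    exists t, In t l /\ in_box B (fst t) (snd t) /\ P (fst t) (snd t) x y.
Proof.
  intros HP.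
  assert (Hex : forall t : Compactness.Tn 2 R, exists d : posreal,
     forall t1 t2, t = (t1, (t2, tt)) -> in_box B t1 t2 -> forall x y,
       Rabs (x - t1) < d -> Rabs (y - t2) < d -> P t1 t2 x y).
  { intros [t1 [t2 []]].
    destruct (classic (in_box B t1 t2)) as [Hin|Hno].
    - destruct (HP t1 t2 Hin) as [d Hd]. exists d. intros a b E _. inversion E; subst. auto.
    - exists (mkposreal 1 Rlt_0_1). intros a b E Hin. inversion E; subst. contradiction. }
  set (delta := fun t => proj1_sig (constructive_indefinite_description _ (Hex t))).
  assert (Hdelta : forall t t1 t2, t = (t1, (t2, tt)) -> in_box B t1 t2 -> forall x y,
       Rabs (x - t1) < delta t -> Rabs (y - t2) < delta t -> P t1 t2 x y).
  { intros t. unfold delta. destruct (constructive_indefinite_description _ (Hex t)) as [d Hd]. exact Hd. }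
  destruct (NNPP _ (compactness_list 2 (- B, (- B, tt)) (B, (B, tt)) delta)) as [l Hl].
  exists (map (fun t : Compactness.Tn 2 R => let '(a, (b, _)) := t in (a, b)) l).
  intros x y [Hx Hy].
  destruct (Hl (x, (y, tt))) as [[a [b []]] [Hin [Hb Hc]]].
  { simpl. apply Rabs_le_between in Hx, Hy. tauto. }
  simpl in Hb, Hc.
  assert (Hab : in_box B a b) by (split; apply Rabs_le; lra).
  exists (a, b). repeat split; try apply Hab.
  - apply in_map_iff. exists (a, (b, tt)). auto.
  - apply (Hdelta (a, (b, tt)) a b eq_refl Hab); tauto.
Qed.

Lemma list_upper_bound {A} (l : list A) (F : A -> R) : exists M, forall t, In t l -> F t <= M.
Proof.
  induction l as [|a l [M HM]]; [exists 0; intros t []|].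
  exists (Rmax (F a) M). intros t [<-|Ht]; [apply Rmax_l|].
  eapply Rle_trans; [apply HM; auto | apply Rmax_r].
Qed.

Lemma list_max_lt {A} (l : list A) (P : A -> Prop) (F : A -> R) S :
  (forall t, In t l -> P t -> F t < S) ->
  exists M, M < S /\ forall t, In t l -> P t -> F t <= M.
Proof.
  induction l as [|a l IH]; intros H.
  - exists (S - 1). split; [lra| intros t []].
  - destruct IH as [M [HM HM2]]; [intros t Ht; apply H; right; auto|].
    destruct (classic (P a)) as [Pa|nPa].
    + assert (F a < S) by (apply H; [left|]; auto).
      exists (Rmax M (F a)). split; [unfold Rmax; destruct Rle_dec; lra|].
      intros t [<-|Ht] Pt; [apply Rmax_r|].
      eapply Rle_trans; [apply HM2; auto| apply Rmax_l].
    + exists M. split; auto. intros t [<-|Ht] Pt; [contradiction | apply HM2; auto].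
Qed.

Section ContinuousOnBox.

Variables (h : R -> R -> R) (B : R).
Hypothesis h_continuous : forall x y, continuity_2d_pt h x y.

Lemma continuous_bounded_on_box : exists M, forall x y, in_box B x y -> h x y <= M.
Proof.
  destruct (box_finite_subcover B (fun t1 t2 x y => h x y < h t1 t2 + 1)) as [l Hl].
  { intros t1 t2 _. destruct (h_continuous t1 t2 (mkposreal 1 Rlt_0_1)) as [d Hd].
    exists d. intros x y Hx Hy. specialize (Hd x y Hx Hy). apply Rabs_def2 in Hd. simpl in Hd. lra. }
  destruct (list_upper_bound l (fun t => h (fst t) (snd t))) as [M HM].
  exists (M + 1). intros x y Hin.
  destruct (Hl x y Hin) as [t [Ht [_ Hq]]]. specialize (HM t Ht). lra.
Qed.

Lemma continuous_max_on_box : 0 <= B ->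
  exists x0 y0, in_box B x0 y0 /\ forall x y, in_box B x y -> h x y <= h x0 y0.
Proof.
  intros HB.
  set (E := fun z => exists x y, in_box B x y /\ z = h x y).
  destruct (completeness E) as [S [HS1 HS2]].
  { destruct continuous_bounded_on_box as [M HM]. exists M. intros z [x [y [Hin ->]]]. auto. }
  { exists (h 0 0), 0, 0. split; auto. unfold in_box. rewrite Rabs_R0. lra. }
  apply NNPP. intros Hno.
  (* otherwise [h < S] on the box, and a finite cover gives a bound strictly below [S] *)
  assert (Hlt : forall x y, in_box B x y -> h x y < S).
  { intros x y Hxy. destruct (Rlt_le_dec (h x y) S) as [|Hge]; auto. exfalso. apply Hno.
    exists x, y. split; auto. intros x' y' Hin'. assert (h x' y' <= S); [apply HS1; exists x', y'; auto | lra]. }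
  destruct (box_finite_subcover B (fun t1 t2 x y => h x y < (h t1 t2 + S) / 2)) as [l Hl].
  { intros t1 t2 Ht. assert (Hp : 0 < (S - h t1 t2) / 2) by (specialize (Hlt t1 t2 Ht); lra).
    destruct (h_continuous t1 t2 (mkposreal _ Hp)) as [d Hd].
    exists d. intros x y Hx Hy. specialize (Hd x y Hx Hy). apply Rabs_def2 in Hd. simpl in Hd. lra. }
  destruct (list_max_lt l (fun t => in_box B (fst t) (snd t)) (fun t => h (fst t) (snd t)) S)
    as [M [HM HM']]; [intros t _ Ht; apply Hlt; auto|].
  assert (S <= (M + S) / 2); [|lra].
  apply HS2. intros z [x [y [Hin ->]]].
  destruct (Hl x y Hin) as [t [Ht [Htb Hq]]]. specialize (HM' t Ht Htb). lra.
Qed.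

End ContinuousOnBox.

Section Maximum.

Variables (w1 w2 : R * R) (ps : list (R * R)) (lam : R) (u : R -> R -> R).
Hypothesis det_nonzero : fst w1 * snd w2 - snd w1 * fst w2 <> 0.
Hypothesis u_solution : is_solution w1 w2 ps lam u.

(* [max u A] off the singular points, extended by [A] at them: continuous since [u -> -oo] there *)
Definition capped_solution A x y :=
  if excluded_middle_informative (singular w1 w2 ps x y) then A else Rmax (u x y) A.

Lemma capped_solution_continuous A x y : continuity_2d_pt (capped_solution A) x y.
Proof.
  intros eps. unfold capped_solution.
  destruct (excluded_middle_informative (singular w1 w2 ps x y)) as [Hs|Hn].
  - destruct (solution_below_near_singular w1 w2 ps lam u x y A u_solution Hs) as [d [Hd Hd2]].
    exists (mkposreal d Hd). simpl. intros a b Ha Hb.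
    destruct (excluded_middle_informative (singular w1 w2 ps a b)) as [_|Hn'].
    + rewrite Rminus_diag, Rabs_R0. apply cond_pos.
    + rewrite Rmax_right by (left; apply Hd2; auto).
      rewrite Rminus_diag, Rabs_R0. apply cond_pos.
  - destruct (nonsingular_open w1 w2 ps det_nonzero x y Hn) as [d1 [Hd1 Ho]].
    destruct u_solution as [_ [Hsm _]].
    destruct (proj1 (Hsm nil x y Hn) eps) as [d2 Hd2]. simpl in Hd2.
    exists (mkposreal _ (Rmin_pos _ _ Hd1 (cond_pos d2))). simpl. intros a b Ha Hb.
    pose proof (Rmin_l d1 d2). pose proof (Rmin_r d1 d2).
    destruct (excluded_middle_informative (singular w1 w2 ps a b)) as [Hs|_];
      [exfalso; apply (Ho a b); [lra | lra | auto]|].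
    specialize (Hd2 a b ltac:(lra) ltac:(lra)).
    revert Hd2. unfold Rmax. do 2 destruct Rle_dec; unfold Rabs; repeat destruct Rcase_abs; lra.
Qed.

Lemma capped_solution_periodic A x y m k :
  capped_solution A (x + lattice_x w1 w2 m k) (y + lattice_y w1 w2 m k) = capped_solution A x y.
Proof.
  unfold capped_solution.
  destruct excluded_middle_informative as [H1|H1];
  destruct excluded_middle_informative as [H2|H2]; auto.
  - exfalso. apply H2, (singular_shift w1 w2 ps x y m k). auto.
  - exfalso. apply H1, (singular_shift w1 w2 ps x y m k). auto.
  - rewrite (solution_periodic w1 w2 ps lam u u_solution m k x y H2). auto.
Qed.

Lemma solution_attains_max x1 y1 : ~ singular w1 w2 ps x1 y1 ->
  exists x0 y0, ~ singular w1 w2 ps x0 y0 /\ u x1 y1 <= u x0 y0 /\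
    forall x y, ~ singular w1 w2 ps x y -> u x y <= u x0 y0.
Proof.
  intros Hn1.
  set (A := u x1 y1). set (h := capped_solution A).
  destruct (continuous_max_on_box h (lattice_size w1 w2)) as [t1 [t2 [Ht Hmax]]].
  { apply capped_solution_continuous. }
  { apply lattice_size_ge0. }
  assert (Hglob : forall x y, h x y <= h t1 t2).
  { intros x y. destruct (lattice_reduce_to_box w1 w2 det_nonzero x y) as [m [k [Bx By]]].
    replace (h x y) with (h (x - lattice_x w1 w2 m k + lattice_x w1 w2 m k)
                            (y - lattice_y w1 w2 m k + lattice_y w1 w2 m k)) by (f_equal; ring).
    unfold h. rewrite capped_solution_periodic. apply Hmax. split; auto. }
  assert (Hu_le : forall x y, ~ singular w1 w2 ps x y -> u x y <= h x y).
  { intros x y Hn. unfold h, capped_solution.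
    destruct excluded_middle_informative; [contradiction | apply Rmax_l]. }
  assert (HA : A <= h t1 t2).
  { eapply Rle_trans; [| apply (Hglob x1 y1)]. unfold h, capped_solution.
    destruct excluded_middle_informative; [contradiction | apply Rmax_r]. }
  destruct (classic (~ singular w1 w2 ps t1 t2 /\ A < u t1 t2)) as [[Hn Hlt]|Hno].
  - exists t1, t2. repeat split; auto; [lra|].
    intros x y Hn'. eapply Rle_trans; [apply Hu_le; auto|].
    eapply Rle_trans; [apply Hglob|]. unfold h, capped_solution.
    destruct excluded_middle_informative; [contradiction|]. rewrite Rmax_left; lra.
  - assert (Eh : h t1 t2 = A).
    { unfold h, capped_solution. destruct excluded_middle_informative; auto.
      rewrite Rmax_right; auto. destruct (Rle_lt_dec (u t1 t2) A); auto. exfalso. apply Hno; auto. }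
    exists x1, y1. repeat split; auto; [apply Rle_refl|].
    intros x y Hn'. eapply Rle_trans; [apply Hu_le; auto|]. fold A. rewrite <- Eh. apply Hglob.
Qed.

End Maximum.

(** * The maximum is negative *)

Section Smooth.

Variables (U : R -> R -> Prop) (u : R -> R -> R).
Hypothesis u_smooth : smooth_on U u.

Lemma smooth_is_derive1 l a b : U a b ->
  is_derive (fun t => iter_partial l u t b) a (partial1 (iter_partial l u) a b).
Proof. intros Hab. apply Derive_correct, (u_smooth l a b Hab). Qed.

Lemma smooth_is_derive2 l a b : U a b ->
  is_derive (fun t => iter_partial l u a t) b (partial2 (iter_partial l u) a b).
Proof. intros Hab. apply Derive_correct, (u_smooth l a b Hab). Qed.

Lemma smooth_continuity l a b : U a b -> continuity_2d_pt (iter_partial l u) a b.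
Proof. intros Hab. apply (u_smooth l a b Hab). Qed.

Lemma smooth_local_max x0 y0 d : 0 < d ->
  (forall x y, Rabs (x - x0) < d -> Rabs (y - y0) < d -> U x y /\ u x y <= u x0 y0) ->
  partial1 u x0 y0 = 0 /\ partial2 u x0 y0 = 0 /\
  partial1 (partial1 u) x0 y0 <= 0 /\ partial2 (partial2 u) x0 y0 <= 0.
Proof.
  intros Hd Hmax.
  assert (H0 : forall r, Rabs (r - r) < d) by (intros r; rewrite Rminus_diag, Rabs_R0; auto).
  assert (HU : U x0 y0) by apply (Hmax x0 y0 (H0 x0) (H0 y0)).
  assert (Hx : forall t, Rabs (t - x0) < d -> u t y0 <= u x0 y0) by (intros; apply Hmax; auto).
  assert (Hy : forall t, Rabs (t - y0) < d -> u x0 t <= u x0 y0) by (intros; apply Hmax; auto).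
  repeat split.
  - apply (local_max_derive_eq0 (fun t => u t y0) x0 d Hd Hx), (smooth_is_derive1 nil); auto.
  - apply (local_max_derive_eq0 (fun t => u x0 t) y0 d Hd Hy), (smooth_is_derive2 nil); auto.
  - apply (local_max_derive2_le0 (fun t => u t y0) x0 d Hd Hx (fun t => partial1 u t y0)).
    + intros t Ht. apply (smooth_is_derive1 nil). apply Hmax; auto.
    + apply (smooth_is_derive1 (true :: nil)); auto.
  - apply (local_max_derive2_le0 (fun t => u x0 t) y0 d Hd Hy (fun t => partial2 u x0 t)).
    + intros t Ht. apply (smooth_is_derive2 nil). apply Hmax; auto.
    + apply (smooth_is_derive2 (false :: nil)); auto.
Qed.

End Smooth.

Lemma solution_max_le0 w1 w2 ps lam u x0 y0 :
  fst w1 * snd w2 - snd w1 * fst w2 <> 0 -> 0 < lam -> is_solution w1 w2 ps lam u ->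
  ~ singular w1 w2 ps x0 y0 -> (forall x y, ~ singular w1 w2 ps x y -> u x y <= u x0 y0) ->
  u x0 y0 <= 0.
Proof.
  intros HD Hlam [_ [Hsm [Heq _]]] Hn Hmax.
  destruct (nonsingular_open w1 w2 ps HD x0 y0 Hn) as [d [Hd Ho]].
  destruct (smooth_local_max _ u Hsm x0 y0 d Hd) as [D1 [D2 [D11 D22]]].
  { intros x y Hx Hy. split; [|apply Hmax]; apply Ho; auto. }
  specialize (Heq x0 y0 Hn). unfold laplacian, grad_sq in Heq. rewrite D1, D2 in Heq.
  apply Rnot_lt_le. intros Hpos.
  assert (He : 1 < exp (u x0 y0)) by (rewrite <- exp_0; apply exp_increasing; auto).
  assert (0 < lam * exp (u x0 y0) * (exp (u x0 y0) - 1) ^ 2)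
    by (apply Rmult_lt_0_compat; [apply Rmult_lt_0_compat; [lra | apply exp_pos] | apply pow_lt; lra]).
  nra.
Qed.

Definition defect (u : R -> R -> R) x y := (1 - exp (u x y)) ^ 2.

Definition defect_d (u v : R -> R -> R) x y := 2 * (exp (u x y) ^ 2 - exp (u x y)) * v x y.

Definition defect_dd (u v w vw : R -> R -> R) x y :=
  2 * (2 * exp (u x y) ^ 2 - exp (u x y)) * w x y * v x y
  + 2 * (exp (u x y) ^ 2 - exp (u x y)) * vw x y.

Lemma is_derive_defect (a : R -> R) x a' : is_derive a x a' ->
  is_derive (fun t => (1 - exp (a t)) ^ 2) x (2 * (exp (a x) ^ 2 - exp (a x)) * a').
Proof.
  intros Ha. eapply is_derive_eq.
  - apply (is_derive_pow (fun t => 1 - exp (a t)) 2 x (- (a' * exp (a x)))).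
    eapply is_derive_eq.
    + apply (is_derive_minus (fun _ => 1) (fun t => exp (a t)));
        [apply is_derive_const | apply (is_derive_comp exp a); [apply is_derive_exp | exact Ha]].
    + unfold minus, zero, plus, opp, scal; simpl; unfold mult; simpl.
      match goal with |- ?a = ?b => change (@eq R a b) end. ring.
  - simpl. ring.
Qed.

Lemma is_derive_defect_d (a b : R -> R) x a' b' : is_derive a x a' -> is_derive b x b' ->
  is_derive (fun t => 2 * (exp (a t) ^ 2 - exp (a t)) * b t) x
    (2 * (2 * exp (a x) ^ 2 - exp (a x)) * a' * b x + 2 * (exp (a x) ^ 2 - exp (a x)) * b').
Proof.
  intros Ha Hb.
  assert (He : is_derive (fun t => exp (a t)) x (a' * exp (a x)))
    by (apply (is_derive_comp exp a); [apply is_derive_exp | exact Ha]).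
  eapply is_derive_eq.
  - apply (is_derive_mult (fun t => 2 * (exp (a t) ^ 2 - exp (a t))) b);
      [| exact Hb | intros; apply Rmult_comm].
    apply is_derive_scal, (is_derive_minus (fun t => exp (a t) ^ 2) (fun t => exp (a t))); [|exact He].
    apply (is_derive_pow (fun t => exp (a t)) 2 x _ He).
  - unfold minus, plus, opp, mult; simpl. match goal with |- ?a = ?b => change (@eq R a b) end. ring.
Qed.

Lemma defect_C2_box (U : R -> R -> Prop) (u : R -> R -> R) x0 y0 rho : smooth_on U u ->
  (forall a b, Rabs (a - x0) < rho -> Rabs (b - y0) < rho -> U a b) ->
  C2_box x0 y0 rho (defect u) (defect_d u (partial1 u)) (defect_d u (partial2 u))
    (defect_dd u (partial1 u) (partial1 u) (partial1 (partial1 u)))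
    (defect_dd u (partial1 u) (partial2 u) (partial2 (partial1 u)))
    (defect_dd u (partial2 u) (partial1 u) (partial1 (partial2 u)))
    (defect_dd u (partial2 u) (partial2 u) (partial2 (partial2 u))).
Proof.
  intros S HU.
  assert (D1 := fun l a b Ha Hb => smooth_is_derive1 U u S l a b (HU a b Ha Hb)).
  assert (D2 := fun l a b Ha Hb => smooth_is_derive2 U u S l a b (HU a b Ha Hb)).
  assert (C := fun l a b Ha Hb => smooth_continuity U u S l a b (HU a b Ha Hb)).
  split; [|split]; intros a b Ha Hb;
    pose proof (C nil a b Ha Hb); pose proof (C (true :: nil) a b Ha Hb);
    pose proof (C (false :: nil) a b Ha Hb); pose proof (C (true :: true :: nil) a b Ha Hb);
    pose proof (C (false :: true :: nil) a b Ha Hb); pose proof (C (true :: false :: nil) a b Ha Hb);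
    pose proof (C (false :: false :: nil) a b Ha Hb); simpl in *;
    unfold defect, defect_d, defect_dd; (split; [|split; [|split]]); try continuity_2d.
  - apply (is_derive_defect (fun t => u t b)), (D1 nil); auto.
  - apply (is_derive_defect (fun t => u a t)), (D2 nil); auto.
  - apply (is_derive_defect_d (fun t => u t b) (fun t => partial1 u t b)); [apply (D1 nil) | apply (D1 (true :: nil))]; auto.
  - apply (is_derive_defect_d (fun t => u a t) (fun t => partial1 u a t)); [apply (D2 nil) | apply (D2 (true :: nil))]; auto.
  - apply (is_derive_defect_d (fun t => u t b) (fun t => partial2 u t b)); [apply (D1 nil) | apply (D1 (false :: nil))]; auto.
  - apply (is_derive_defect_d (fun t => u a t) (fun t => partial2 u a t)); [apply (D2 nil) | apply (D2 (false :: nil))]; auto.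
Qed.

Lemma defect_laplacian_le lam e p q L1 L2 : 0 < lam -> 0 < e <= 1 ->
  (1 - e) * (L1 + L2) - e * (p ^ 2 + q ^ 2) = - lam * e * (e - 1) ^ 2 ->
  (2 * (2 * e ^ 2 - e) * p * p + 2 * (e ^ 2 - e) * L1)
  + (2 * (2 * e ^ 2 - e) * q * q + 2 * (e ^ 2 - e) * L2) <= 2 * lam * (1 - e) ^ 2.
Proof.
  intros Hlam He Heq.
  (* subtracting [2 e] times the equation leaves [2 (e^2 - e) |grad u|^2 + 2 lam e^2 (e - 1)^2] *)
  replace (2 * (2 * e ^ 2 - e) * p * p + 2 * (e ^ 2 - e) * L1 +
           (2 * (2 * e ^ 2 - e) * q * q + 2 * (e ^ 2 - e) * L2))
    with (2 * (e ^ 2 - e) * (p ^ 2 + q ^ 2) + 2 * lam * e ^ 2 * (e - 1) ^ 2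
          - 2 * e * ((1 - e) * (L1 + L2) - e * (p ^ 2 + q ^ 2) + lam * e * (e - 1) ^ 2)) by ring.
  replace ((1 - e) * (L1 + L2) - e * (p ^ 2 + q ^ 2) + lam * e * (e - 1) ^ 2) with 0 by lra.
  assert ((e ^ 2 - e) * (p ^ 2 + q ^ 2) <= 0)
    by (pose proof (pow2_ge_0 p); pose proof (pow2_ge_0 q); assert (e ^ 2 - e <= 0) by nra; nra).
  assert (e ^ 2 * (e - 1) ^ 2 <= (1 - e) ^ 2)
    by (pose proof (pow2_ge_0 (e - 1)); assert (e ^ 2 <= 1) by nra;
        replace ((1 - e) ^ 2) with (1 * (e - 1) ^ 2) by ring; nra).
  nra.
Qed.

Lemma real_induction (P : R -> Prop) a b : a <= b -> P a ->
  (forall t, a < t <= b -> (forall s, a <= s < t -> P s) -> P t) ->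
  (forall t, a <= t < b -> P t -> exists d, 0 < d /\ forall s, t <= s < t + d -> P s) ->
  P b.
Proof.
  intros Hab Ha Hclosed Hopen.
  set (T := fun t => a <= t <= b /\ forall s, a <= s <= t -> P s).
  destruct (completeness T) as [ts [Hub Hlub]].
  { exists b. intros t [Ht _]. lra. }
  { exists a. split; [lra|]. intros s Hs. replace s with a by lra. auto. }
  assert (Hts : a <= ts <= b).
  { split; [apply Hub; split; [lra|] | apply Hlub; intros t [Ht _]; lra].
    intros s Hs. replace s with a by lra. auto. }
  assert (Below : forall s, a <= s < ts -> P s).
  { intros s Hs. apply NNPP. intros HnP.
    assert (ts <= s); [|lra].
    apply Hlub. intros t [Ht HtP]. destruct (Rle_lt_dec t s) as [|Hlt]; auto.
    exfalso. apply HnP, HtP. lra. }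
  assert (Pts : P ts).
  { destruct (Req_dec ts a) as [->|Hne]; auto. apply Hclosed; auto. lra. }
  destruct (Req_dec ts b) as [<-|Hne]; auto. exfalso.
  destruct (Hopen ts ltac:(lra) Pts) as [d [Hd Hd2]].
  set (t' := Rmin b (ts + d / 2)).
  assert (Ht' : ts < t' <= b /\ t' < ts + d) by (unfold t', Rmin; destruct Rle_dec; lra).
  assert (T t').
  { split; [lra|]. intros s Hs.
    destruct (Rlt_le_dec s ts); [apply Below; lra | apply Hd2; lra]. }
  assert (t' <= ts) by (apply Hub; auto). lra.
Qed.

Section ZeroMaximum.

Variables (w1 w2 : R * R) (ps : list (R * R)) (lam : R) (u : R -> R -> R).
Hypothesis det_nonzero : fst w1 * snd w2 - snd w1 * fst w2 <> 0.
Hypothesis lam_pos : 0 < lam.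
Hypothesis u_solution : is_solution w1 w2 ps lam u.
Hypothesis u_nonpos : forall x y, ~ singular w1 w2 ps x y -> u x y <= 0.

Lemma solution_zero_set_open x0 y0 : ~ singular w1 w2 ps x0 y0 -> u x0 y0 = 0 ->
  exists d, 0 < d /\ forall x y, Rabs (x - x0) < d -> Rabs (y - y0) < d ->
    ~ singular w1 w2 ps x y /\ u x y = 0.
Proof.
  intros Hn Hu0.
  pose proof u_solution as [_ [Hsm [Heq _]]].
  destruct (nonsingular_open w1 w2 ps det_nonzero x0 y0 Hn) as [rho [Hrho Ho]].
  (* near [(x0, y0)], where it vanishes, [Q = (1 - e^u)^2 >= 0] satisfies [ΔQ <= 2 lam Q] *)
  destruct (strong_minimum_principle x0 y0 rho _ _ _ _ _ _ _ (defect_C2_box _ u x0 y0 rho Hsm Ho)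
              (2 * lam) Hrho ltac:(lra)) as [r0 [Hr0 Hz]].
  { intros a b Ha Hb. assert (Hab := Ho a b Ha Hb). split; [apply pow2_ge_0|].
    specialize (Heq a b Hab). unfold laplacian, grad_sq in Heq.
    unfold defect, defect_dd. apply defect_laplacian_le; auto.
    split; [apply exp_pos|]. rewrite <- exp_0.
    destruct (Rle_lt_or_eq_dec _ _ (u_nonpos a b Hab)) as [Hlt|E0];
      [left; apply exp_increasing; lra | rewrite E0; lra]. }
  { unfold defect. rewrite Hu0, exp_0. ring. }
  exists (Rmin rho (r0 / 2)). split; [apply Rmin_pos; lra|].
  intros x y Hx Hy.
  pose proof (Rmin_l rho (r0 / 2)). pose proof (Rmin_r rho (r0 / 2)).
  split; [apply Ho; lra|].
  assert (Hd : defect u x y = 0).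
  { apply Hz. apply Rabs_def2 in Hx. apply Rabs_def2 in Hy. nra. }
  unfold defect in Hd.
  rewrite <- (ln_exp (u x y)). replace (exp (u x y)) with 1 by nra. apply ln_1.
Qed.

Lemma segment_close a b t s K d : 0 < K -> Rabs (b - a) < K -> Rabs (s - t) < d / K ->
  Rabs ((a + s * (b - a)) - (a + t * (b - a))) < d.
Proof.
  intros HK Hb Hst.
  replace ((a + s * (b - a)) - (a + t * (b - a))) with ((s - t) * (b - a)) by ring.
  rewrite Rabs_mult. pose proof (Rabs_pos (s - t)). pose proof (Rabs_pos (b - a)).
  assert (d / K * K = d) by (field; lra).
  apply Rle_lt_trans with (Rabs (s - t) * K); [apply Rmult_le_compat_l; lra | nra].
Qed.

Lemma solution_max_ne0 x0 y0 : ps <> nil -> ~ singular w1 w2 ps x0 y0 -> u x0 y0 <> 0.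
Proof.
  intros Hps Hn Hu0.
  destruct ps as [|[px py] ps'] eqn:Eps; [contradiction|]. rewrite <- Eps in *.
  (* continue the zero set of [u] along the segment from [(x0, y0)] to the singular point [p1] *)
  assert (Hp : singular w1 w2 ps px py)
    by (exists (px, py); split; [rewrite Eps; left; auto | apply lattice_equiv_refl]).
  set (gx := fun t => x0 + t * (px - x0)). set (gy := fun t => y0 + t * (py - y0)).
  set (K := 1 + Rabs (px - x0) + Rabs (py - y0)).
  assert (HK : 0 < K /\ Rabs (px - x0) < K /\ Rabs (py - y0) < K).
  { unfold K. pose proof (Rabs_pos (px - x0)). pose proof (Rabs_pos (py - y0)). lra. }
  assert (Hg : forall s t d, Rabs (s - t) < d / K -> Rabs (gx s - gx t) < d /\ Rabs (gy s - gy t) < d)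
    by (intros; split; apply (segment_close _ _ _ _ K); tauto).
  assert (Hnear : forall t d, 0 < t -> 0 < d -> exists s, 0 <= s < t /\ Rabs (s - t) < d / K).
  { intros t d Ht Hd. assert (0 < d / K) by (apply Rdiv_lt_0_compat; lra).
    exists (t - Rmin t (d / K) / 2).
    pose proof (Rmin_l t (d / K)). pose proof (Rmin_r t (d / K)).
    pose proof (Rmin_pos t (d / K) Ht ltac:(lra)).
    split; [lra|]. rewrite Rabs_left; lra. }
  assert (P1 : ~ singular w1 w2 ps (gx 1) (gy 1) /\ u (gx 1) (gy 1) = 0).
  { apply (real_induction (fun t => ~ singular w1 w2 ps (gx t) (gy t) /\ u (gx t) (gy t) = 0) 0 1);
      [lra | unfold gx, gy; rewrite !Rmult_0_l, !Rplus_0_r; auto | |].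
    - intros t Ht Hbelow.
      destruct (classic (singular w1 w2 ps (gx t) (gy t))) as [Hs|Hns].
      + destruct (solution_below_near_singular w1 w2 ps lam u (gx t) (gy t) (-1) u_solution Hs)
          as [d [Hd Hd2]].
        destruct (Hnear t d ltac:(lra) Hd) as [s [Hs1 Hs2]].
        destruct (Hbelow s Hs1) as [Hns Hus]. destruct (Hg s t d Hs2) as [C1 C2].
        specialize (Hd2 _ _ C1 C2 Hns). lra.
      + split; auto. apply NNPP. intros Hnz.
        assert (Hpos : 0 < Rabs (u (gx t) (gy t))) by (apply Rabs_pos_lt; auto).
        destruct u_solution as [_ [Hsm _]].
        destruct (proj1 (Hsm nil _ _ Hns) (mkposreal _ Hpos)) as [d Hd]. simpl in Hd.
        destruct (Hnear t d ltac:(lra) (cond_pos d)) as [s [Hs1 Hs2]].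
        destruct (Hbelow s Hs1) as [_ Hus]. destruct (Hg s t d Hs2) as [C1 C2].
        specialize (Hd _ _ C1 C2). rewrite Hus, Rminus_0_l, Rabs_Ropp in Hd. lra.
    - intros t Ht [Hns Hzt].
      destruct (solution_zero_set_open _ _ Hns Hzt) as [d [Hd Hd2]].
      exists (d / K). split; [apply Rdiv_lt_0_compat; lra|]. intros s Hs.
      destruct (Hg s t d) as [C1 C2]; [rewrite Rabs_pos_eq; lra|]. apply Hd2; auto. }
  apply (proj1 P1). unfold gx, gy. rewrite !Rmult_1_l. replace (x0 + (px - x0)) with px by ring.
  replace (y0 + (py - y0)) with py by ring. auto.
Qed.

End ZeroMaximum.

Theorem lemma3p2 (w1 w2 : R * R) (ps : list (R * R)) (lam : R) (u : R -> R -> R) :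
  fst w1 * snd w2 - snd w1 * fst w2 <> 0 ->
  ps <> nil ->
  0 < lam ->
  is_solution w1 w2 ps lam u ->
  forall x y, ~ singular w1 w2 ps x y -> u x y < 0.
Proof.
  intros HD Hps Hlam Hsol x y Hn.
  destruct (solution_attains_max w1 w2 ps lam u HD Hsol x y Hn) as [x0 [y0 [Hn0 [Hge Hmax]]]].
  assert (Hle : u x0 y0 <= 0) by (apply (solution_max_le0 w1 w2 ps lam u); auto).
  assert (Hne : u x0 y0 <> 0).
  { apply (solution_max_ne0 w1 w2 ps lam u HD Hlam Hsol); auto.
    intros a b Hab. eapply Rle_trans; [apply Hmax; auto | exact Hle]. }
  lra.
Qed.
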